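(* Let $K=\mathbb{Q}(\sqrt m)$ be a Deng–Li field and write its fundamental unit as $\varepsilon=a+b\sqrt m$ with $a,b\in\mathbb{Z}$. Then $b$ is odd.
   Context: A Deng–Li field is $K=\mathbb{Q}(\sqrt m)$, $m=\ell_1\ell_2\cdots\ell_n$ with $n\ge 2$ even and $\ell_1,\dots,\ell_n$ distinct primes such that: - $\ell_1\equiv3\pmod8$; - $\ell_i\equiv5\pmod8$ for $i\ge2$; - $\big(\frac{\ell_1}{\ell_2}\big)=-1$, and $\big(\frac{\ell_1}{\ell_j}\big)=1$ for $j\ge3$; - $\big(\frac{\ell_i}{\ell_j}\big)=-1$ for $2\le i<j\le n$ (Legendre symbols). Here $m\equiv7\pmod 8$, the ring of integers is $\mathbb{Z}[\sqrt m]$, and the fundamental unit has norm $1$. *)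

From Stdlib Require Import ZArith Znumtheory Reals List ClassicalEpsilon.
Open Scope Z_scope.

Definition is_qr (a p : Z) : Prop :=
  exists x : Z, (x * x - a) mod p = 0.

Definition legendre (a p : Z) : Z :=
  if Z.eqb (a mod p) 0 then 0
  else if excluded_middle_informative (is_qr a p) then 1 else -1.

Definition prod_first (l : nat -> Z) (n : nat) : Z :=
  fold_right Z.mul 1 (map l (seq 0 n)).

(* Deng-Li field: m = l_1 ... l_n, where (0-indexed) l 0 = l_1, ..., l (n-1) = l_n *)
Definition deng_li (m : Z) : Prop :=
  exists (n : nat) (l : nat -> Z),
    (2 <= n)%nat /\ Nat.Even n /\
    (forall i, (i < n)%nat -> prime (l i)) /\
    (forall i j, (i < n)%nat -> (j < n)%nat -> i <> j -> l i <> l j) /\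
    l 0%nat mod 8 = 3 /\
    (forall i, (1 <= i < n)%nat -> l i mod 8 = 5) /\
    legendre (l 0%nat) (l 1%nat) = -1 /\
    (forall j, (3 <= S j <= n)%nat -> legendre (l 0%nat) (l j) = 1) /\
    (forall i j, (1 <= i)%nat -> (i < j)%nat -> (j < n)%nat -> legendre (l i) (l j) = -1) /\
    m = prod_first l n.

Open Scope R_scope.

(* x lies in Z[sqrt m] (the ring of integers of Q(sqrt m) here), viewed inside R *)
Definition in_Zsqrt (m : Z) (x : R) : Prop :=
  exists a b : Z, x = IZR a + IZR b * sqrt (IZR m).

Definition is_unit_Zsqrt (m : Z) (x : R) : Prop :=
  in_Zsqrt m x /\ exists y : R, in_Zsqrt m y /\ x * y = 1.

Definition fundamental_unit (m : Z) (eps : R) : Prop :=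
  is_unit_Zsqrt m eps /\ 1 < eps /\
  forall u : R, is_unit_Zsqrt m u -> 1 < u -> eps <= u.

(* Since [m = 3 mod 4], every unit of [Z[sqrt m]] has norm [1]. If [b] were even, write
   [a = 2 k + 1] and [b = 2 c]; then [(k + 1) k = m c^2] and, [k] and [k + 1] being coprime,
   [k + 1 = d1 x^2] and [k = d2 y^2] with [d1 d2 = m]. Modulo 4, [l_1] divides [d2]. Modulo each
   other [l_j], [d1 x^2 - d2 y^2 = 1] makes [d1] or [d2] a square, and the prescribed Legendre
   symbols (made symmetric by quadratic reciprocity, proved here with Gauss sums) turn these
   conditions into parity constraints that, [n] being even, leave only [d1 = 1]. Then
   [(x + y sqrt m)^2 = a + b sqrt m] with [1 < x + y sqrt m], against minimality. *)

From Stdlib Require Import ZArith Reals Znumtheory Lia Lra Psatz ClassicalEpsilon.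

Open Scope Z_scope.

Lemma Z_parity_split (r : Z) : exists h e, r = 2 * h + e /\ (e = 0 \/ e = 1).
Proof.
exists (r / 2), (r mod 2). split.
- apply Z_div_mod_eq_full.
- pose proof (Z.mod_pos_bound r 2). lia.
Qed.

Lemma Z_mod4_3_split (m : Z) : m mod 4 = 3 -> exists u, m = 4 * u + 3.
Proof. exists (m / 4). pose proof (Z_div_mod_eq_full m 4). lia. Qed.

Lemma Zmod4_of_mod8 (x : Z) : x mod 4 = (x mod 8) mod 4.
Proof. symmetry. apply Z.mod_mod_divide. exists 2. reflexivity. Qed.

(* Infinite descent: modulo 4, [r * r = m * (s * s)] forces [r] and [s] to be even. *)
Lemma sqr_eq_mul_sqr_3mod4 (m r s : Z) :
  m mod 4 = 3 -> r * r = m * (s * s) -> s = 0.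
Proof.
intros Hm. destruct (Z_mod4_3_split m Hm) as [u ->].
assert (descent : forall k : nat, forall s r, Z.abs s < Z.of_nat k ->
          r * r = (4 * u + 3) * (s * s) -> s = 0).
{ induction k as [|k IH]; intros s' r' Hk E; [lia|].
  destruct (Z_parity_split s') as [h [e [-> [-> | ->]]]];
  destruct (Z_parity_split r') as [g [f [-> [-> | ->]]]]; try lia.
  destruct (Z.eq_dec h 0) as [-> | hn0]; [lia|].
  assert (h = 0) by (apply (IH h g); lia). lia. }
intros E. apply (descent (S (Z.to_nat (Z.abs s))) s r); lia.
Qed.

Lemma Zsqr_sub_mul_sqr_neq_m1 (m a b : Z) : m mod 4 = 3 -> a * a - m * (b * b) <> -1.
Proof.
intros Hm. destruct (Z_mod4_3_split m Hm) as [u ->].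
destruct (Z_parity_split a) as [h [e [-> [-> | ->]]]];
destruct (Z_parity_split b) as [g [f [-> [-> | ->]]]]; lia.
Qed.

Open Scope R_scope.

Section Zsqrt.
Variable m : Z.
Hypotheses (m_3mod4 : (m mod 4 = 3)%Z) (m_gt0 : (0 < m)%Z).

Let t := sqrt (IZR m).

Lemma sqrt_m_sqr : t * t = IZR m.
Proof. apply sqrt_sqrt, IZR_le. lia. Qed.

Lemma sqrt_m_gt0 : 0 < t.
Proof. apply sqrt_lt_R0, IZR_lt. lia. Qed.

Lemma Zsqrt_eq0 (r s : Z) : IZR r + IZR s * t = 0 -> s = 0%Z.
Proof.
intros E. apply (sqr_eq_mul_sqr_3mod4 m r s m_3mod4), eq_IZR.
rewrite !mult_IZR, <- sqrt_m_sqr.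
replace (IZR r) with (- IZR s * t) by lra. ring.
Qed.

Lemma Zsqrt_unit_norm (a b : Z) :
  is_unit_Zsqrt m (IZR a + IZR b * t) -> (a * a - m * (b * b) = 1)%Z.
Proof.
intros [_ [y [[c [d ->]] Hy]]]. fold t in Hy.
assert (Eirr : IZR (a * c + m * (b * d) - 1) + IZR (a * d + b * c) * t = 0).
{ rewrite minus_IZR, !plus_IZR, !mult_IZR, <- sqrt_m_sqr. nra. }
assert (Eim : (a * d + b * c = 0)%Z) by exact (Zsqrt_eq0 _ _ Eirr).
rewrite Eim, Rmult_0_l, Rplus_0_r in Eirr. apply eq_IZR in Eirr.
assert (Nmul : ((a * a - m * (b * b)) * (c * c - m * (d * d)) = 1)%Z).
{ replace ((a * a - m * (b * b)) * (c * c - m * (d * d)))%Z with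
    ((a * c + m * (b * d)) * (a * c + m * (b * d))
     - m * ((a * d + b * c) * (a * d + b * c)))%Z by ring.
  rewrite Eim. nia. }
destruct (Z.eq_mul_1 _ _ Nmul) as [N1 | Nm1]; [exact N1|].
exfalso. exact (Zsqr_sub_mul_sqr_neq_m1 m a b m_3mod4 Nm1).
Qed.

(* The conjugate [a - b sqrt m = 1 / (a + b sqrt m)] lies in (0, 1). *)
Lemma Zsqrt_unit_gt1_coords (a b : Z) :
  (a * a - m * (b * b) = 1)%Z -> 1 < IZR a + IZR b * t -> (1 <= a)%Z /\ (1 <= b)%Z.
Proof.
intros N H.
pose proof sqrt_m_gt0 as Ht.
assert (Econj : (IZR a + IZR b * t) * (IZR a - IZR b * t) = 1).
{ replace 1 with (IZR 1) by reflexivity. rewrite <- N, minus_IZR, !mult_IZR, <- sqrt_m_sqr. ring. }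
assert (Hc0 : 0 < IZR a - IZR b * t) by nra.
assert (Hc1 : IZR a - IZR b * t < 1) by nra.
split.
- destruct (Z_le_gt_dec 1 a) as [|Ha]; [assumption|].
  assert (IZR a <= 0) by (apply IZR_le; lia). lra.
- destruct (Z_le_gt_dec 1 b) as [|Hb]; [assumption|].
  assert (IZR b <= 0) by (apply IZR_le; lia). nra.
Qed.

Lemma Zsqrt_unit_of_norm (x y : Z) :
  (x * x - m * (y * y) = 1)%Z -> is_unit_Zsqrt m (IZR x + IZR y * t).
Proof.
intros N. split; [exists x, y; reflexivity|].
exists (IZR x + IZR (- y) * t). split; [exists x, (- y)%Z; reflexivity|].
replace 1 with (IZR 1) by reflexivity.
rewrite <- N, opp_IZR, minus_IZR, !mult_IZR, <- sqrt_m_sqr. ring.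
Qed.

Lemma fundamental_unit_not_sqr (a b x y : Z) :
  fundamental_unit m (IZR a + IZR b * t) ->
  (1 <= x)%Z -> (1 <= y)%Z -> (x * x - m * (y * y) = 1)%Z ->
  a = (x * x + m * (y * y))%Z -> b = (2 * x * y)%Z -> False.
Proof.
intros [_ [Hgt1 Hmin]] Hx Hy N -> ->.
pose proof sqrt_m_gt0 as Ht.
assert (Hroot : 1 < IZR x + IZR y * t).
{ assert (1 <= IZR x) by (apply IZR_le; lia).
  assert (1 <= IZR y) by (apply IZR_le; lia). nra. }
assert (Hle := Hmin _ (Zsqrt_unit_of_norm x y N) Hroot).
replace (IZR (x * x + m * (y * y)) + IZR (2 * x * y) * t)
  with ((IZR x + IZR y * t) * (IZR x + IZR y * t)) in Hle
  by (rewrite plus_IZR, !mult_IZR, <- sqrt_m_sqr; ring).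
nra.
Qed.

End Zsqrt.

Close Scope R_scope.
Close Scope Z_scope.

From mathcomp Require Import all_boot all_algebra cyclic finfield.
From mathcomp Require Import zify ring.
Set Implicit Arguments. Unset Strict Implicit. Unset Printing Implicit Defensive.
Import GRing.Theory.
Local Open Scope ring_scope.

Lemma pchar_odd_two_neq0 (R : nzRingType) (q : nat) :
  q \in [pchar R] -> odd q -> 2%:R != 0 :> R.
Proof.
move=> chR q_odd; rewrite -(dvdn_pcharf chR) dvdn_prime2 ?(pcharf_prime chR) //.
by apply: contraL q_odd => /eqP ->.
Qed.

Lemma pchar_odd_one_neq_m1 (R : nzRingType) (q : nat) :
  q \in [pchar R] -> odd q -> 1 != -1 :> R.
Proof. by move=> chR q_odd; rewrite -subr_eq0 opprK -mulr2n (pchar_odd_two_neq0 chR). Qed.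

Lemma signr_eq1 (R : nzRingType) (k : nat) : 1 != -1 :> R -> ((-1) ^+ k == 1 :> R) = ~~ odd k.
Proof.
move=> one_m1; rewrite -signr_odd.
by case: (odd k); rewrite ?expr1 ?expr0 ?eqxx // eq_sym (negbTE one_m1).
Qed.

Lemma natr_eq1_pchar (R : nzRingType) (r n : nat) : r \in [pchar R] -> (0 < n)%N ->
  (n%:R == 1 :> R) = (r %| n.-1)%N.
Proof.
move=> chR n_gt0; rewrite (dvdn_pcharf chR) -subr_eq0.
by rewrite -[n in n%:R](prednK n_gt0) -natr1 addrK.
Qed.

Section EulerCriterion.
Variable p : nat.
Hypotheses (pr_p : prime p) (p_odd : odd p).
Local Notation h := (p.-1 %/ 2)%N.

Lemma Fp_valD (x y : 'F_p) : nat_of_ord (x + y) = ((x + y) %% p)%N.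
Proof. by rewrite /=; congr (modn _ _); apply: Fp_cast. Qed.

Lemma Fp_valM (x y : 'F_p) : nat_of_ord (x * y) = ((x * y) %% p)%N.
Proof. by rewrite /=; congr (modn _ _); apply: Fp_cast. Qed.

Lemma half_pred_double : (h + h = p.-1)%N.
Proof. have := odd_prime_gt2 p_odd pr_p; have := modn2 p; rewrite p_odd /=; lia. Qed.

Lemma half_pred_gt0 : (0 < h)%N.
Proof. have := half_pred_double; have := odd_prime_gt2 p_odd pr_p; lia. Qed.

Lemma Fp_one_neq_m1 : 1 != -1 :> 'F_p.
Proof. exact: pchar_odd_one_neq_m1 (pchar_Fp pr_p) p_odd. Qed.

Lemma Fp_fermat (x : 'F_p) : x != 0 -> x ^+ p.-1 = 1.
Proof.
move=> x_neq0; apply: (mulIf x_neq0); rewrite mul1r -exprSr prednK ?prime_gt0 //.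
by have := expf_card x; rewrite card_Fp.
Qed.

Lemma Fp_euler_sign (x : 'F_p) : x != 0 -> x ^+ h = 1 \/ x ^+ h = -1.
Proof.
move=> x_neq0; have /eqP : (x ^+ h) ^+ 2 = 1.
  by rewrite -exprM muln2 -addnn half_pred_double Fp_fermat.
by rewrite sqrf_eq1 => /orP[] /eqP; tauto.
Qed.

Lemma Fp_euler_sqr (x y : 'F_p) : y * y = x -> x != 0 -> x ^+ h = 1.
Proof.
move=> <- x_neq0; have y_neq0 : y != 0 by apply: contra x_neq0 => /eqP ->; rewrite mul0r.
by rewrite -expr2 -exprM mul2n -addnn half_pred_double Fp_fermat.
Qed.

Lemma Fp_nat_eq (i j : nat) : (i < p)%N -> (j < p)%N -> (i%:R == j%:R :> 'F_p) = (i == j).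
Proof.
move=> ip jp; apply/eqP/eqP => [|-> //].
by move/(congr1 (@nat_of_ord _)); rewrite !val_Fp_nat // !modn_small.
Qed.

Lemma Fp_sqr_nat_inj (i j : nat) : (0 < i <= h)%N -> (0 < j <= h)%N ->
  (i%:R : 'F_p) ^+ 2 = j%:R ^+ 2 -> i = j.
Proof.
move=> /andP[i_gt0 ih] /andP[j_gt0 jh] /eqP; rewrite -subr_eq0 subr_sqr mulf_eq0.
have hh := half_pred_double.
case/orP => [|]; first by rewrite subr_eq0 Fp_nat_eq => [/eqP| |]; lia.
by rewrite -natrD -(dvdn_pcharf (pchar_Fp pr_p)) => /dvdn_leq; lia.
Qed.

(* The [h] nonzero squares are [h] distinct roots of ['X^h - 1]; a non-square root would be
   one too many. *)
Lemma Fp_euler_nonsqr (x : 'F_p) : x != 0 -> ~ (exists y, y * y = x) -> x ^+ h = -1.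
Proof.
move=> x_neq0 nsq; case: (Fp_euler_sign x_neq0) => // xh.
pose rs := x :: [seq (i%:R : 'F_p) ^+ 2 | i <- iota 1 h].
have := @max_unity_roots _ h rs half_pred_gt0.
have -> : all h.-unity_root rs.
  apply/allP => z; rewrite inE => /orP[/eqP ->|/mapP[i]]; first by rewrite unity_rootE xh.
  rewrite mem_iota => /andP[i1 ih] ->; rewrite unity_rootE.
  apply/eqP; apply: (Fp_euler_sqr (y := i%:R)); first by rewrite expr2.
  rewrite expf_eq0 /= -(dvdn_pcharf (pchar_Fp pr_p)).
  by apply/negP => /dvdn_leq; have := half_pred_double; lia.
have -> : uniq rs.
  rewrite /= map_inj_in_uniq ?iota_uniq ?andbT.
    by apply/mapP => -[i _ E]; apply: nsq; exists i%:R; rewrite E expr2.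
  by move=> i j; rewrite !mem_iota => ? ? ?; apply: Fp_sqr_nat_inj => //; lia.
by rewrite /= size_map size_iota ltnn => /(_ isT isT).
Qed.

Lemma Fp_nonresidue_exists : exists r : 'F_p, r != 0 /\ r ^+ h != 1.
Proof.
pose rs := [seq (i%:R : 'F_p) | i <- iota 1 p.-1].
have : ~~ all h.-unity_root rs.
  apply/negP => /(max_unity_roots half_pred_gt0).
  have -> : uniq rs.
    rewrite map_inj_in_uniq ?iota_uniq // => i j; rewrite !mem_iota => ? ? /eqP.
    by rewrite Fp_nat_eq => [/eqP| |]; lia.
  by rewrite size_map size_iota; have := half_pred_double; have := half_pred_gt0; lia.
case/allPn => z /mapP[i]; rewrite mem_iota => /andP[i1 ip] -> nu.
exists i%:R; split; last by rewrite -unity_rootE.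
by rewrite -(dvdn_pcharf (pchar_Fp pr_p)); apply/negP => /dvdn_leq; lia.
Qed.

Lemma Fp_m1_half_pow : (p %% 4 = 1)%N -> (-1 : 'F_p) ^+ h = 1.
Proof.
move=> p4; rewrite -signr_odd.
have -> : odd h = false by have := half_pred_double; have := modn2 h; lia.
by rewrite expr0.
Qed.

End EulerCriterion.

Section GaussSum.
Variables p q : nat.
Hypotheses (pr_p : prime p) (pr_q : prime q) (p_odd : odd p) (q_odd : odd q) (p_neq_q : p != q).
Variable F : finFieldType.
Hypothesis chF : q \in [pchar F].
Variable z : F.
Hypothesis z_prim : p.-primitive_root z.
Local Notation h := (p.-1 %/ 2)%N.

Definition psi (x : 'F_p) : F := z ^+ (x : nat).

Definition qchi (x : 'F_p) : F := if x == 0 then 0 else if x ^+ h == 1 then 1 else -1.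

Definition gauss_sum : F := \sum_x qchi x * psi x.

Lemma psiD (x y : 'F_p) : psi (x + y) = psi x * psi y.
Proof.
by rewrite /psi -exprD Fp_valD // prim_expr_mod.
Qed.

Lemma psi0 : psi 0 = 1.
Proof. by rewrite /psi expr0. Qed.

Lemma psiMn (x : 'F_p) n : psi (x * n%:R) = psi x ^+ n.
Proof.
elim: n => [|n IHn]; first by rewrite mulr0 psi0 expr0.
by rewrite mulr_natr mulrS psiD -mulr_natr IHn exprS.
Qed.

Lemma sum_psiM (s : 'F_p) : \sum_x psi (x * s) = if s == 0 then p%:R else 0.
Proof.
have [->|s_neq0] := eqVneq s 0.
  under eq_bigr => x _ do rewrite mulr0 psi0.
  by rewrite sumr_const card_Fp.
rewrite (reindex_inj (mulIf (invr_neq0 s_neq0))) /=.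
under eq_bigr => x _ do rewrite mulrVK ?unitfE //.
have z_neq1 : z != 1.
  apply: contraTneq (prime_gt1 pr_p) => z1; rewrite -leqNgt.
  by apply: dvdn_leq => //; rewrite (prim_order_dvd z_prim) z1 expr1n.
have : (z - 1) * \sum_(i < (Zp_trunc (pdiv p)).+2) z ^+ i = 0.
  by rewrite -subrX1 Fp_cast // prim_expr_order // subrr.
by move/eqP; rewrite mulf_eq0 subr_eq0 (negbTE z_neq1) => /eqP.
Qed.

Lemma qchi0 : qchi 0 = 0.
Proof. by rewrite /qchi eqxx. Qed.

Lemma qchi1 : qchi 1 = 1.
Proof. by rewrite /qchi oner_eq0 expr1n eqxx. Qed.

Lemma qchi_sign x : x != 0 -> qchi x = 1 \/ qchi x = -1.
Proof. by rewrite /qchi => /negbTE ->; case: ifP; tauto. Qed.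

Lemma qchi_sqr x : x != 0 -> qchi x * qchi x = 1.
Proof. by case/qchi_sign => ->; rewrite ?mulr1 ?mulrNN ?mulr1. Qed.

Lemma qchiM x y : qchi (x * y) = qchi x * qchi y.
Proof.
have [->|x_neq0] := eqVneq x 0; first by rewrite mul0r qchi0 mul0r.
have [->|y_neq0] := eqVneq y 0; first by rewrite mulr0 qchi0 mulr0.
rewrite /qchi mulf_eq0 (negbTE x_neq0) (negbTE y_neq0) exprMn /=.
have one_m1 := Fp_one_neq_m1 pr_p p_odd.
by case: (Fp_euler_sign pr_p p_odd x_neq0) => ->;
   case: (Fp_euler_sign pr_p p_odd y_neq0) => ->;
   rewrite ?mulr1 ?mul1r ?mulrNN ?mulr1 ?eqxx ?mulN1r ?mulrN1 //
     ?(eq_sym (-1)) (negbTE one_m1) ?mulrNN ?mulr1 ?mul1r.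
Qed.

Lemma qchiV x : qchi x^-1 = qchi x.
Proof.
have [->|x_neq0] := eqVneq x 0; first by rewrite invr0.
have chiVx : qchi x * qchi x^-1 = 1 by rewrite -qchiM mulfV // qchi1.
by rewrite -[qchi x^-1]mul1r -(qchi_sqr x_neq0) -mulrA chiVx mulr1.
Qed.

Lemma sum_qchi : \sum_x qchi x = 0.
Proof.
have [r [r_neq0 rh]] := Fp_nonresidue_exists pr_p p_odd.
have chir : qchi r = -1 by rewrite /qchi (negbTE r_neq0) (negbTE rh).
have sum_opp : \sum_x qchi x = - \sum_x qchi x.
  rewrite {1}(reindex_inj (mulfI r_neq0)) /=.
  by under eq_bigr => i _ do rewrite qchiM chir mulN1r; rewrite sumrN.
have /eqP : (\sum_x qchi x) * 2%:R = 0 by rewrite mulr_natr mulr2n {1}sum_opp addNr.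
by rewrite mulf_eq0 (negbTE (pchar_odd_two_neq0 chF q_odd)) orbF => /eqP.
Qed.

Lemma gauss_sum_scale u : u != 0 -> \sum_x qchi x * psi (x * u) = qchi u * gauss_sum.
Proof.
move=> u_neq0; rewrite (reindex_inj (mulIf (invr_neq0 u_neq0))) /= /gauss_sum mulr_sumr.
by apply: eq_bigr => x _; rewrite mulrVK ?unitfE // qchiM qchiV mulrCA mulrA.
Qed.

Lemma gauss_sum_sqr : gauss_sum * gauss_sum = qchi (-1) * p%:R.
Proof.
rewrite {1}/gauss_sum mulr_suml.
transitivity (\sum_a \sum_t qchi a * qchi a * (qchi t * psi (a * (1 + t)))).
  apply: eq_bigr => a _; rewrite /gauss_sum mulr_sumr.
  have [->|a_neq0] := eqVneq a 0.
    rewrite qchi0 !mul0r big1 => [|t _]; last by rewrite mul0r.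
    by rewrite big1 // => t _; rewrite mul0r.
  rewrite (reindex_inj (mulfI a_neq0)) /=; apply: eq_bigr => t _.
  by rewrite qchiM mulrDr mulr1 psiD; ring.
rewrite exchange_big /=.
transitivity (\sum_t qchi t * (\sum_a psi (a * (1 + t)) - 1)).
  apply: eq_bigr => t _.
  rewrite (bigD1 0) //= [in RHS](bigD1 0) //= qchi0 !mul0r add0r psi0 addrC addrK.
  by rewrite mulr_sumr; apply: eq_bigr => a a_neq0; rewrite (qchi_sqr a_neq0) mul1r.
under eq_bigr => t _ do rewrite sum_psiM mulrBr mulr1.
rewrite sumrB sum_qchi subr0 (bigD1 (-1)) //= addrN eqxx big1 ?addr0 // => t t_neqm1.
by rewrite ifF ?mulr0 //; apply/negbTE; rewrite addrC addr_eq0.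
Qed.

Lemma qchiX_char x : qchi x ^+ q = qchi x.
Proof.
have [->|x_neq0] := eqVneq x 0; first by rewrite qchi0 expr0n eqn0Ngt prime_gt0.
by case: (qchi_sign x_neq0) => ->; rewrite ?expr1n // -signr_odd q_odd expr1.
Qed.

(* The Frobenius [y |-> y ^+ q] of [F] permutes the terms of the Gauss sum. *)
Lemma gauss_sum_frobenius : gauss_sum ^+ q = qchi q%:R * gauss_sum.
Proof.
have q_neq0 : q%:R != 0 :> 'F_p.
  by rewrite -(dvdn_pcharf (pchar_Fp pr_p)) dvdn_prime2 // eq_sym.
rewrite -(pFrobenius_autE chF) /gauss_sum rmorph_sum /= -(gauss_sum_scale q_neq0).
by apply: eq_bigr => a _; rewrite rmorphM /= !pFrobenius_autE qchiX_char psiMn.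
Qed.

(* Comparing [gauss_sum ^+ q] computed from [gauss_sum ^+ 2 = p] and by Frobenius. *)
Lemma quadratic_reciprocity_gauss_sum : (p %% 4 = 1)%N ->
  ((q%:R : 'F_p) ^+ h == 1) = ((p%:R : 'F_q) ^+ (q.-1 %/ 2) == 1).
Proof.
move=> p4.
have chim1 : qchi (-1) = 1.
  by rewrite /qchi oppr_eq0 oner_eq0 Fp_m1_half_pow // eqxx.
have gsqr := gauss_sum_sqr; rewrite chim1 mul1r in gsqr.
have p_neq0 : p%:R != 0 :> F by rewrite -(dvdn_pcharf chF) dvdn_prime2 // eq_sym.
have g_neq0 : gauss_sum != 0.
  by apply: contra p_neq0 => /eqP g0; rewrite -gsqr g0 mul0r.
set hq := (q.-1 %/ 2)%N.
have gq : gauss_sum ^+ q = gauss_sum * p%:R ^+ hq.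
  have -> : q = (2 * hq).+1.
    by rewrite /hq; have := prime_gt1 pr_q; have := modn2 q; rewrite q_odd /=; lia.
  by rewrite exprS exprM expr2 gsqr.
rewrite gauss_sum_frobenius mulrC in gq; have {}gq := mulfI g_neq0 gq.
rewrite -[in RHS]natrX (natr_eq1_pchar (pchar_Fp pr_q)) ?expn_gt0 ?prime_gt0 //.
rewrite -(natr_eq1_pchar chF) ?expn_gt0 ?prime_gt0 // natrX -gq.
rewrite /qchi -(dvdn_pcharf (pchar_Fp pr_p)) dvdn_prime2 // eq_sym (negbTE p_neq_q).
by case: ifP => _; rewrite ?eqxx // eq_sym (negbTE (pchar_odd_one_neq_m1 chF q_odd)).
Qed.

End GaussSum.

Lemma finField_prim_root_exists (p q : nat) : prime p -> prime q -> p != q ->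
  exists F : finFieldType, q \in [pchar F] /\ exists z : F, p.-primitive_root z.
Proof.
move=> pr_p pr_q p_neq_q.
have k_gt0 : (0 < p.-1)%N by have := prime_gt1 pr_p; lia.
have [F chF cardF] := pPrimePowerField pr_q k_gt0.
exists F; split => //.
set N := #|F|.-1.
have N_gt0 : (0 < N)%N.
  by rewrite /N cardF -subn1 subn_gt0 -{1}(expn0 q) ltn_exp2l ?prime_gt1.
have pN : (p %| N)%N.
  have q_neq0 : q%:R != 0 :> 'F_p.
    by rewrite -(dvdn_pcharf (pchar_Fp pr_p)) dvdn_prime2 // eq_sym.
  have /eqP := Fp_fermat pr_p q_neq0.
  by rewrite -natrX (natr_eq1_pchar (pchar_Fp pr_p)) ?expn_gt0 ?prime_gt0 // /N cardF.
have [w _ wN] : exists2 w, w \in enum (predC1 (0 : F)) & N.-primitive_root w.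
  apply/hasP/has_prim_root; rewrite ?enum_uniq -?cardE ?cardC1 //.
  apply/allP => x; rewrite mem_enum /= => x_neq0.
  rewrite unity_rootE; apply/eqP/(mulIf x_neq0).
  by rewrite mul1r -exprSr /N prednK ?expf_card // cardF expn_gt0 prime_gt0.
exists (w ^+ (N %/ p)); exact (dvdn_prim_root wN pN).
Qed.

(* By Euler's criterion, the Legendre symbol [(a / p)] read in ['F_p]. *)
Definition euler_symbol (p a : nat) : 'F_p := a%:R ^+ (p.-1 %/ 2).

Lemma euler_symbol_prod (p : nat) (r : seq nat) (P : pred nat) (f : nat -> nat) :
  euler_symbol p (\prod_(i <- r | P i) f i) = \prod_(i <- r | P i) euler_symbol p (f i).
Proof. by rewrite /euler_symbol natr_prod prodrXl. Qed.

Lemma euler_symbol_mul_sqr (p d x : nat) (e : 'F_p) : prime p -> (p %% 4 = 1)%N ->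
  e = 1 \/ e = -1 -> (d * x ^ 2)%:R = e -> euler_symbol p d = 1.
Proof.
move=> pr_p p4 e_sign dx2; have p_odd : odd p by have := modn2 p; lia.
have e_neq0 : e != 0 by case: e_sign => ->; rewrite ?oppr_eq0 oner_eq0.
have x_neq0 : x%:R != 0 :> 'F_p.
  by apply: contra e_neq0 => /eqP x0; rewrite -dx2 natrM natrX x0 expr0n mulr0.
have := congr1 (fun t => t ^+ (p.-1 %/ 2)) dx2.
rewrite /= natrM natrX exprMn -exprM mul2n -addnn half_pred_double // Fp_fermat // mulr1.
by rewrite /euler_symbol => ->; case: e_sign => ->; rewrite ?expr1n ?Fp_m1_half_pow.
Qed.

Theorem quadratic_reciprocity_1mod4 (p q : nat) :
  prime p -> prime q -> odd p -> odd q -> p != q -> (p %% 4 = 1)%N ->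
  (euler_symbol p q == 1) = (euler_symbol q p == 1).
Proof.
move=> pr_p pr_q p_odd q_odd p_neq_q.
have [F [chF [z z_prim]]] := finField_prim_root_exists pr_p pr_q p_neq_q.
exact: (quadratic_reciprocity_gauss_sum pr_p pr_q p_odd q_odd p_neq_q chF z_prim).
Qed.

Lemma prodr_seq_sign (R : pzRingType) (r : seq nat) (P : pred nat) (F : nat -> R) :
  {in r, forall i, P i -> F i = -1} -> \prod_(i <- r | P i) F i = (-1) ^+ count P r.
Proof.
move=> Fm1; rewrite big_seq_cond (eq_bigr (fun=> -1)) => [|i /andP[ir Pi]]; last exact: Fm1.
by rewrite -big_seq_cond big_const_seq iter_mulr_1.
Qed.

Lemma prod_mod4_eq1 (r : seq nat) (P : pred nat) (f : nat -> nat) :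
  {in r, forall i, P i -> f i %% 4 = 1}%N -> (\prod_(i <- r | P i) f i %% 4 = 1)%N.
Proof.
elim: r => [|x r IHr] f1; first by rewrite big_nil.
have IH : (\prod_(i <- r | P i) f i %% 4 = 1)%N.
  by apply: IHr => i ir; apply: f1; rewrite inE ir orbT.
by rewrite big_cons; case: ifP => Px //; rewrite -modnMm IH f1 ?mem_head.
Qed.

Lemma sqrn_mod4 x : (x ^ 2 %% 4 = 0 \/ x ^ 2 %% 4 = 1)%N.
Proof.
rewrite -modnXm; have : (x %% 4 < 4)%N by rewrite ltn_pmod.
by case: (x %% 4)%N => [|[|[|[|]]]] //= _; [left|right|left|right].
Qed.

Lemma mul_sqr_3mod4_neq_succ a b x y : (a %% 4 = 3)%N -> (b %% 4 = 1)%N ->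
  (a * x ^ 2 != (b * y ^ 2).+1)%N.
Proof.
move=> a3 b1; apply/eqP => E.
have Ea : ((a * x ^ 2) %% 4 = (3 * (x ^ 2 %% 4)) %% 4)%N by rewrite -modnMm a3.
have Eb : ((b * y ^ 2).+1 %% 4 = (y ^ 2 %% 4).+1 %% 4)%N.
  by rewrite -addn1 -modnDml -modnMm b1 mul1n modnDml addn1.
by rewrite E Eb in Ea; case: (sqrn_mod4 x) Ea => ->; case: (sqrn_mod4 y) => ->.
Qed.

Lemma dvdn_prod_primes (r : seq nat) (P : pred nat) (f : nat -> nat) (A : nat) :
  uniq r -> {in r &, injective f} ->
  {in r, forall i, P i -> prime (f i) /\ (f i %| A)%N} ->
  (\prod_(i <- r | P i) f i %| A)%N.
Proof.
elim: r => [|x r IHr] /=; first by rewrite big_nil dvd1n.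
move=> /andP[xr ur] finj fP; rewrite big_cons.
have IH : (\prod_(i <- r | P i) f i %| A)%N.
  apply: IHr => // [i j ir jr|i ir]; first by apply: finj; rewrite inE ?ir ?jr orbT.
  by apply: fP; rewrite inE ir orbT.
case: ifP => Px //; have [pr_x dvd_x] := fP x (mem_head _ _) Px.
rewrite Gauss_dvd ?dvd_x ?IH // prime_coprime // Euclid_dvd_prod //.
rewrite big_seq_cond big1 // => i /andP[ir Pi].
have ir' : i \in x :: r by rewrite inE ir orbT.
have [pr_i _] := fP i ir' Pi.
rewrite dvdn_prime2 //; apply: contraNF xr => /eqP /(finj _ _ (mem_head _ _) ir') ->.
exact: ir.
Qed.

Lemma coprime_mul_eq_sqr X Y c : (0 < X)%N -> coprime X Y -> (X * Y = c ^ 2)%N ->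
  exists x, X = (x ^ 2)%N.
Proof.
move=> X_gt0 cXY E; set g := gcdn X c.
have g_gt0 : (0 < g)%N by rewrite gcdn_gt0 X_gt0.
set X' := (X %/ g)%N; set c' := (c %/ g)%N.
have HX : X = (X' * g)%N by rewrite divnK // dvdn_gcdl.
have Hc : c = (c' * g)%N by rewrite divnK // dvdn_gcdr.
have cop : coprime X' c'.
  have : (gcdn X' c' * g = 1 * g)%N by rewrite muln_gcdl -HX -Hc mul1n.
  by move/eqP; rewrite eqn_pmul2r // => /eqP.
have E' : (X' * Y = g * c' ^ 2)%N.
  apply/eqP; rewrite -(eqn_pmul2r g_gt0); apply/eqP.
  by move: E; rewrite {1}HX Hc => E; rewrite mulnAC E; ring.
have X'g : (X' %| g)%N.
  by rewrite -(Gauss_dvdl _ (coprimeXr 2 cop)) -E' dvdn_mulr.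
have gX' : (g %| X')%N.
  rewrite -(@Gauss_dvdl _ _ Y); first by rewrite E' dvdn_mulr.
  exact: coprime_dvdl (dvdn_gcdl X c) cXY.
by exists g; rewrite HX; congr (_ * _)%N; apply/eqP; rewrite eqn_dvd X'g gX'.
Qed.

Lemma odd_of_mod4 (n : nat) (L : nat -> nat) :
  (L 0 %% 4 = 3)%N -> (forall i, (0 < i < n)%N -> (L i %% 4 = 1)%N) ->
  forall i, (i < n)%N -> odd (L i).
Proof.
move=> L0 Li [|i] i_lt_n; rewrite -(odd_mod _ (erefl : odd 4 = false)) ?L0 //.
by rewrite Li.
Qed.

(* Read [s i] as "[l_i] divides [d1]": the hypotheses are the symbol conditions on [d1] modulo the
   [l_j] dividing [d2], and on [d2] modulo the [l_j] dividing [d1]. *)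
Lemma deng_li_sign_parity (n : nat) (s : pred nat) : (1 < n)%N -> ~~ odd n ->
  (forall j, (0 < j < n)%N -> ~~ s j -> ~~ odd (count s (index_iota 1 n))) ->
  (forall j, (0 < j < n)%N -> s j -> odd (count (predC s) (index_iota 1 n)) = (j == 1)%N) ->
  forall j, (0 < j < n)%N -> ~~ s j.
Proof.
move=> n_gt1 n_even sym_out sym_in j0 j0n; apply/negP => sj0.
have r_split : index_iota 1 n = 1%N :: index_iota 2 n.
  rewrite /index_iota; case: n n_gt1 {n_even sym_out sym_in j0n} => [|[|n']] //= _.
  by rewrite !subSS subn0.
have count_sum : (count s (index_iota 1 n) + count (predC s) (index_iota 1 n) = n.-1)%N.
  by rewrite count_predC size_iota subn1.
case: (boolP (all s (index_iota 1 n))) => [all_s | /allPn [j1 j1r nsj1]].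
  have s1 : s 1%N by apply: (allP all_s); rewrite r_split mem_head.
  have := sym_in 1%N (n_gt1 : (0 < 1 < n)%N) s1.
  suff -> : count (predC s) (index_iota 1 n) = 0%N by [].
  by apply/eqP; rewrite -leqn0 leqNgt -has_count; apply/hasPn => i /(allP all_s) /= ->.
have j1n : (0 < j1 < n)%N by move: j1r; rewrite mem_index_iota.
have s_even := sym_out j1 j1n nsj1.
have /hasP [j2 j2r sj2] : has s (index_iota 2 n).
  have s_pos : (0 < count s (index_iota 1 n))%N.
    by rewrite -has_count; apply/hasP; exists j0; rewrite ?mem_index_iota.
  rewrite has_count; move: s_even s_pos; rewrite r_split /=.
  by case: (s 1%N) => /=; case: (count s (index_iota 2 n)) => [|[|k]].
move: j2r; rewrite mem_index_iota => /andP[j2_gt1 j2_lt_n].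
have j2n : (0 < j2 < n)%N by rewrite j2_lt_n andbT ltnW.
have := sym_in j2 j2n sj2; rewrite (gtn_eqF j2_gt1) => k'_even.
by move: count_sum n_even s_even k'_even; have := n_gt1; lia.
Qed.

(* The primes [l_1, ..., l_n] of a Deng-Li field as [L 0, ..., L n.-1], with their table of
   Legendre symbols made symmetric by quadratic reciprocity. *)
Record deng_li_primes (n : nat) (L : nat -> nat) : Prop := DengLiPrimes {
  deng_li_n_gt1 : (1 < n)%N;
  deng_li_n_even : ~~ odd n;
  deng_li_prime : forall i, (i < n)%N -> prime (L i);
  deng_li_inj : forall i j, (i < n)%N -> (j < n)%N -> L i = L j -> i = j;
  deng_li_mod4_0 : (L 0 %% 4 = 3)%N;
  deng_li_mod4 : forall i, (0 < i < n)%N -> (L i %% 4 = 1)%N;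
  deng_li_symbol : forall i j, (i < n)%N -> (0 < j < n)%N -> i != j ->
    euler_symbol (L j) (L i) = if (i == 0)%N && (1 < j)%N then 1 else -1
}.

Section DengLiPrimes.
Variables (n : nat) (L : nat -> nat).
Hypothesis dlL : deng_li_primes n L.
Local Notation M := (\prod_(0 <= i < n) L i)%N.

Lemma deng_li_odd i : (i < n)%N -> odd (L i).
Proof. exact: odd_of_mod4 (deng_li_mod4_0 dlL) (deng_li_mod4 dlL) i. Qed.

Lemma deng_li_prod_mod4 : (M %% 4 = 3)%N.
Proof.
rewrite big_ltn ?(ltnW (deng_li_n_gt1 dlL)) // -modnMm (deng_li_mod4_0 dlL) prod_mod4_eq1 //.
by move=> i; rewrite mem_index_iota => /andP[i_gt0 i_lt_n] _; apply: (deng_li_mod4 dlL); lia.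
Qed.

(* [A.+1 = d1 x^2] and [A = d2 y^2] with [M = d1 d2]; the point is that [d1 = 1]. *)
Section Consecutive.
Variables A c : nat.
Hypotheses (A_gt0 : (0 < A)%N) (Ac : (A.+1 * A = M * c ^ 2)%N).

Let s i := (L i %| A.+1)%N.
Let d1 := (\prod_(0 <= i < n | s i) L i)%N.
Let d2 := (\prod_(0 <= i < n | ~~ s i) L i)%N.

Lemma prod_split : M = (d1 * d2)%N.
Proof. by rewrite /d1 /d2 (bigID s). Qed.

Lemma dvdn_L_prod j : (j < n)%N -> (L j %| M)%N.
Proof. by move=> j_lt_n; rewrite (big_rem j) ?mem_index_iota //= dvdn_mulr. Qed.

Lemma dvdn_d1 : (d1 %| A.+1)%N.
Proof.
apply: dvdn_prod_primes; first exact: iota_uniq.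
  by move=> i j; rewrite !mem_index_iota => /andP[_ ?] /andP[_ ?]; apply: (deng_li_inj dlL).
by move=> i; rewrite mem_index_iota => /andP[_ ?] si; split => //; apply: (deng_li_prime dlL).
Qed.

Lemma dvdn_d2 : (d2 %| A)%N.
Proof.
apply: dvdn_prod_primes; first exact: iota_uniq.
  by move=> i j; rewrite !mem_index_iota => /andP[_ ?] /andP[_ ?]; apply: (deng_li_inj dlL).
move=> i; rewrite mem_index_iota => /andP[_ i_lt_n] nsi.
have pr_i := deng_li_prime dlL i_lt_n; split => //.
have : (L i %| A.+1 * A)%N by rewrite Ac dvdn_mulr // dvdn_L_prod.
by rewrite Euclid_dvdM // => /orP[si|//]; case/negP: nsi.
Qed.

Lemma consecutive_decomp : exists x y,
  [/\ A.+1 = (d1 * x ^ 2)%N, A = (d2 * y ^ 2)%N & c = (x * y)%N].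
Proof.
set X := (A.+1 %/ d1)%N; set Y := (A %/ d2)%N.
have HX : A.+1 = (X * d1)%N by rewrite divnK // dvdn_d1.
have HY : A = (Y * d2)%N by rewrite divnK // dvdn_d2.
clearbody X Y.
have cXY : coprime X Y.
  apply: (@coprime_dvdl _ A.+1); first by rewrite HX dvdn_mulr.
  by apply: (@coprime_dvdr _ A); [rewrite HY dvdn_mulr | rewrite coprimeSn].
have M_gt0 : (0 < M)%N.
  by move: (muln_gt0 A.+1 A); rewrite A_gt0 Ac muln_gt0 => /andP[].
have XY : (X * Y = c ^ 2)%N.
  by apply/eqP; rewrite -(eqn_pmul2l M_gt0) -Ac prod_split {1}HX {1}HY; apply/eqP; ring.
have X_gt0 : (0 < X)%N by case: (posnP X) HX => [->|//].
have Y_gt0 : (0 < Y)%N by case: (posnP Y) HY A_gt0 => [->|//]; rewrite mul0n => ->.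
have [x Hx] := coprime_mul_eq_sqr X_gt0 cXY XY.
have [y Hy] : exists y, Y = (y ^ 2)%N.
  by apply: (@coprime_mul_eq_sqr Y X c Y_gt0); rewrite 1?coprime_sym // mulnC.
exists x, y; split; [by rewrite HX Hx mulnC | by rewrite HY Hy mulnC |].
by apply/eqP; rewrite -(@eqn_exp2r _ _ 2) // -XY Hx Hy; apply/eqP; ring.
Qed.

Lemma L0_ndvd_succ : ~~ s 0.
Proof.
have [x [y [eA1 eA _]]] := consecutive_decomp.
apply/negP => s0; have n_gt0 : (0 < n)%N by have := deng_li_n_gt1 dlL; lia.
have mod4_rest (P : pred nat) : (\prod_(1 <= i < n | P i) L i %% 4 = 1)%N.
  apply: prod_mod4_eq1 => i; rewrite mem_index_iota => /andP[i_gt0 i_lt_n] _.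
  by apply: (deng_li_mod4 dlL); rewrite i_gt0.
have d1_3 : (d1 %% 4 = 3)%N.
  by rewrite /d1 big_ltn_cond // s0 -modnMm (deng_li_mod4_0 dlL) mod4_rest.
have d2_1 : (d2 %% 4 = 1)%N by rewrite /d2 big_ltn_cond // s0 mod4_rest.
by have := mul_sqr_3mod4_neq_succ x y d1_3 d2_1; rewrite -eA1 -eA eqxx.
Qed.

Lemma dvdn_L_d2 j : (j < n)%N -> ~~ s j -> (L j %| d2)%N.
Proof. by move=> j_lt_n nsj; rewrite /d2 (big_rem j) ?mem_index_iota //= nsj dvdn_mulr. Qed.

Lemma euler_symbol_d1 j : (0 < j < n)%N -> ~~ s j -> euler_symbol (L j) d1 = 1.
Proof.
move=> /andP[j_gt0 j_lt_n] nsj; have [x [y [eA1 _ _]]] := consecutive_decomp.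
have pr_j := deng_li_prime dlL j_lt_n.
apply: (@euler_symbol_mul_sqr _ _ x 1) => //; first by apply: (deng_li_mod4 dlL); rewrite j_gt0.
  by left.
have A0 : A%:R = 0 :> 'F_(L j).
  by apply/eqP; rewrite -(dvdn_pcharf (pchar_Fp pr_j)) (dvdn_trans (dvdn_L_d2 j_lt_n nsj)) ?dvdn_d2.
by rewrite -eA1 -natr1 A0 add0r.
Qed.

Lemma euler_symbol_d2 j : (0 < j < n)%N -> s j -> euler_symbol (L j) d2 = 1.
Proof.
move=> /andP[j_gt0 j_lt_n] sj; have [x [y [_ eA _]]] := consecutive_decomp.
have pr_j := deng_li_prime dlL j_lt_n.
apply: (@euler_symbol_mul_sqr _ _ y (-1)) => //; first by apply: (deng_li_mod4 dlL); rewrite j_gt0.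
  by right.
have : A%:R + 1 = 0 :> 'F_(L j) by apply/eqP; rewrite natr1 -(dvdn_pcharf (pchar_Fp pr_j)).
by move/eqP; rewrite addr_eq0 -eA => /eqP.
Qed.

Lemma euler_symbol_d1_sign j : (0 < j < n)%N -> ~~ s j ->
  euler_symbol (L j) d1 = (-1) ^+ count s (index_iota 1 n).
Proof.
move=> jn nsj; have n_gt0 : (0 < n)%N by have := deng_li_n_gt1 dlL; lia.
rewrite /d1 big_ltn_cond // (negbTE L0_ndvd_succ) euler_symbol_prod prodr_seq_sign // => i.
rewrite mem_index_iota => /andP[i_gt0 i_lt_n] si.
rewrite (deng_li_symbol dlL) //; last by apply: contraTneq si => ->.
by rewrite eqn0Ngt i_gt0.
Qed.

Lemma euler_symbol_d2_sign j : (0 < j < n)%N -> s j ->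
  euler_symbol (L j) d2 = (-1) ^+ ((j == 1)%N + count (predC s) (index_iota 1 n)).
Proof.
move=> jn sj; have n_gt0 : (0 < n)%N by have := deng_li_n_gt1 dlL; lia.
have j_neq0 : j != 0%N by move: jn; rewrite -lt0n => /andP[].
rewrite /d2 euler_symbol_prod big_ltn_cond // L0_ndvd_succ exprD.
rewrite (deng_li_symbol dlL) // 1?eq_sym //= prodr_seq_sign => [|i].
  by congr (_ * _); case: (ltngtP 1 j) jn => [_|j_lt1|<- _] //=.
rewrite mem_index_iota => /andP[i_gt0 i_lt_n] nsi.
rewrite (deng_li_symbol dlL) //; last by apply: contraNneq nsi => ->.
by rewrite eqn0Ngt i_gt0.
Qed.

Lemma deng_li_consecutive : exists x y, [/\ A.+1 = (x ^ 2)%N, A = (M * y ^ 2)%N & c = (x * y)%N].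
Proof.
have [x [y [eA1 eA ec]]] := consecutive_decomp.
have one_m1 j : (j < n)%N -> 1 != -1 :> 'F_(L j).
  by move=> j_lt_n; exact: Fp_one_neq_m1 (deng_li_prime dlL j_lt_n) (deng_li_odd j_lt_n).
have ns i : (i < n)%N -> ~~ s i.
  case: i => [|i] i_lt_n; first exact: L0_ndvd_succ.
  apply: (deng_li_sign_parity (deng_li_n_gt1 dlL) (deng_li_n_even dlL)) => [j jn nsj|j jn sj|//].
    have j_lt_n : (j < n)%N by case/andP: jn.
    by rewrite -(signr_eq1 _ (one_m1 j j_lt_n)) -euler_symbol_d1_sign ?euler_symbol_d1.
  have j_lt_n : (j < n)%N by case/andP: jn.
  have := euler_symbol_d2 jn sj; rewrite euler_symbol_d2_sign // => /eqP.
  by rewrite (signr_eq1 _ (one_m1 j j_lt_n)) oddD oddb; case: (j == 1%N); case: (odd _).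
have d1_1 : d1 = 1%N.
  by rewrite /d1 big_nat_cond big1 // => i /andP[/andP[_ /ns /negbTE ->]].
have d2_M : d2 = M.
  by rewrite /d2 big_nat_cond [RHS]big_nat_cond; apply: eq_bigl => i; case: ltnP => //= /ns ->.
by exists x, y; rewrite eA1 eA d1_1 d2_M mul1n.
Qed.

End Consecutive.
End DengLiPrimes.

(* [ssrint] and [ssralg] took over the [%Z] and [%R] delimiters. *)
Delimit Scope Z_scope with Z.
Delimit Scope R_scope with R.

Lemma Zofnat_mod A P : (0 < P)%N -> Z.of_nat (A %% P) = (Z.of_nat A mod Z.of_nat P)%Z.
Proof.
move=> P_gt0; have E := divn_eq A P; have R_lt := ltn_pmod A P_gt0.
by apply: (@Z.mod_unique _ _ (Z.of_nat (A %/ P))); [left|]; lia.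
Qed.

Lemma prime_Z_to_nat (p : Z) : Znumtheory.prime p -> prime (Z.to_nat p).
Proof.
move=> pr_p; have p_ge2 := prime_ge_2 _ pr_p.
apply/primeP; split; first lia.
move=> d /dvdnP [k Hk].
have : (Z.of_nat d | p)%Z.
  exists (Z.of_nat k); have : Z.of_nat (Z.to_nat p) = Z.of_nat (k * d) by rewrite Hk.
  by rewrite Z2Nat.id; lia.
by case/(prime_divisors _ pr_p) => [|[|[|]]] E; apply/orP; [lia|left|right|lia]; apply/eqP; lia.
Qed.

Lemma Zofnat_prod (l : nat -> Z) (k n : nat) :
  (forall i, (k <= i < k + n)%N -> (0 <= l i)%Z) ->
  Z.of_nat (\prod_(i <- iota k n) Z.to_nat (l i))%N =
  List.fold_right Z.mul 1%Z (List.map l (List.seq k n)).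
Proof.
elim: n k => [|n IHn] k l_ge0; first by rewrite big_nil.
rewrite /= big_cons Nat2Z.inj_mul IHn; last by move=> i /andP[? ?]; apply: l_ge0; lia.
by rewrite Z2Nat.id //; apply: l_ge0; lia.
Qed.

Lemma legendre_neq0_natr (P A : nat) : prime P ->
  (Z.of_nat A mod Z.of_nat P =? 0)%Z = false -> A%:R != 0 :> 'F_P.
Proof.
move=> pr_P; apply: contraFneq => /eqP.
by rewrite -(dvdn_pcharf (pchar_Fp pr_P)) => /eqP dvd; rewrite -Zofnat_mod ?prime_gt0 // dvd.
Qed.

Lemma euler_symbol_legendre_m1 (P A : nat) : prime P -> odd P ->
  legendre (Z.of_nat A) (Z.of_nat P) = (-1)%Z -> euler_symbol P A = -1.
Proof.
move=> pr_P P_odd; rewrite /legendre; case A_mod: (Z.eqb _ 0) => //.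
case: excluded_middle_informative => // nqr _.
apply: Fp_euler_nonsqr => //; first exact: legendre_neq0_natr.
move=> [y Hy]; apply: nqr; exists (Z.of_nat y).
have Hyy : ((y * y) %% P = A %% P)%N.
  by have := congr1 (@nat_of_ord _) Hy; rewrite val_Fp_nat // Fp_valM.
have := congr1 Z.of_nat Hyy; rewrite !Zofnat_mod ?prime_gt0 // Nat2Z.inj_mul => yyA.
by rewrite Zminus_mod yyA Z.sub_diag.
Qed.

Lemma euler_symbol_legendre_1 (P A : nat) : prime P -> odd P ->
  legendre (Z.of_nat A) (Z.of_nat P) = 1%Z -> euler_symbol P A = 1.
Proof.
move=> pr_P P_odd; rewrite /legendre; case A_mod: (Z.eqb _ 0) => //.
case: excluded_middle_informative => // [[x Hx]] _.
have P_gt0 : (0 < Z.of_nat P)%Z by have := prime_gt0 pr_P; lia.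
set X := Z.to_nat (x mod Z.of_nat P).
have HX : Z.of_nat X = (x mod Z.of_nat P)%Z.
  by rewrite /X Z2Nat.id //; have := Z.mod_pos_bound x _ P_gt0; lia.
apply: (@Fp_euler_sqr P pr_P P_odd _ X%:R); last exact: legendre_neq0_natr.
rewrite -natrM -[LHS]Fp_nat_mod // -[RHS]Fp_nat_mod //; congr (_%:R).
apply: Nat2Z.inj; rewrite !Zofnat_mod ?prime_gt0 // Nat2Z.inj_mul HX -Z.mul_mod; last lia.
have -> : (x * x = (x * x - Z.of_nat A) + Z.of_nat A)%Z by ring.
by rewrite Zplus_mod Hx Z.add_0_l Zmod_mod.
Qed.

Section LegendreTable.
Variables (n : nat) (L : nat -> nat).
Hypotheses (L_prime : forall i, (i < n)%N -> prime (L i))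
  (L_inj : forall i j, (i < n)%N -> (j < n)%N -> L i = L j -> i = j)
  (L0_mod4 : (L 0 %% 4 = 3)%N) (L_mod4 : forall i, (0 < i < n)%N -> (L i %% 4 = 1)%N)
  (leg01 : legendre (Z.of_nat (L 0)) (Z.of_nat (L 1)) = (-1)%Z)
  (leg0j : forall j, (1 < j < n)%N -> legendre (Z.of_nat (L 0)) (Z.of_nat (L j)) = 1%Z)
  (legij : forall i j, (0 < i)%N -> (i < j < n)%N ->
     legendre (Z.of_nat (L i)) (Z.of_nat (L j)) = (-1)%Z).

(* Above the diagonal the symbols are given; below it, quadratic reciprocity applies since
   [L j = 1 mod 4] for [j > 0]. *)
Lemma legendre_table_symbol i j : (i < n)%N -> (0 < j < n)%N -> i != j ->
  euler_symbol (L j) (L i) = if (i == 0)%N && (1 < j)%N then 1 else -1.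
Proof.
move=> i_lt_n /andP[j_gt0 j_lt_n] i_neq_j.
have [pr_j j_odd] := (L_prime j_lt_n, odd_of_mod4 L0_mod4 L_mod4 j_lt_n).
case: (ltngtP i j) => [i_lt_j|j_lt_i|i_eq_j]; last by rewrite i_eq_j eqxx in i_neq_j.
  case: (posnP i) => [i0|i_gt0]; last first.
    by apply: euler_symbol_legendre_m1 => //; apply: legij; lia.
  rewrite i0 /=; have [j_gt1|j_le1] := ltnP 1 j.
    by apply: euler_symbol_legendre_1 => //; apply: leg0j; lia.
  have j1 : j = 1%N by lia.
  by subst j; apply: euler_symbol_legendre_m1.
have i_gt0 : (0 < i)%N by lia.
rewrite eqn0Ngt i_gt0 /=.
have [pr_i i_odd] := (L_prime i_lt_n, odd_of_mod4 L0_mod4 L_mod4 i_lt_n).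
have ji : euler_symbol (L i) (L j) = -1 by apply: euler_symbol_legendre_m1 => //; apply: legij; lia.
have Lji : L i != L j by apply/eqP => /(L_inj i_lt_n j_lt_n); lia.
have := quadratic_reciprocity_1mod4 pr_i pr_j i_odd j_odd Lji (L_mod4 _).
rewrite i_gt0 i_lt_n ji eq_sym (negbTE (Fp_one_neq_m1 pr_i i_odd)) => /(_ isT) /esym ij_ne1.
have Li_neq0 : (L i)%:R != 0 :> 'F_(L j).
  by rewrite -(dvdn_pcharf (pchar_Fp pr_j)) dvdn_prime2 // eq_sym.
rewrite /euler_symbol in ij_ne1 *.
by case: (Fp_euler_sign pr_j j_odd Li_neq0) ij_ne1 => ->; rewrite ?eqxx.
Qed.

End LegendreTable.

Lemma deng_li_primes_of (m : Z) : deng_li m ->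
  exists n L, deng_li_primes n L /\ m = Z.of_nat (\prod_(0 <= i < n) L i).
Proof.
move=> [n [l [n_ge2 [n_even [l_prime [l_inj [l0_mod8 [l_mod8 [leg01 [leg0j [legij ->]]]]]]]]]]].
pose L i := Z.to_nat (l i).
have l_ge2 i : (i < n)%N -> (2 <= l i)%Z by move=> /ltP /l_prime /prime_ge_2.
have lL i : (i < n)%N -> l i = Z.of_nat (L i) by move=> /l_ge2 ?; rewrite /L Z2Nat.id //; lia.
have L_prime i : (i < n)%N -> prime (L i) by move=> /ltP /l_prime /prime_Z_to_nat.
have L_inj i j : (i < n)%N -> (j < n)%N -> L i = L j -> i = j.
  move=> i_lt_n j_lt_n Lij; case: (eqVneq i j) => // /eqP i_neq_j.
  by case: (l_inj i j (ltP i_lt_n) (ltP j_lt_n) i_neq_j); rewrite !lL // Lij.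
have L_mod4 i : (i < n)%N -> Z.of_nat (L i %% 4) = (l i mod 4)%Z.
  by move=> i_lt_n; rewrite Zofnat_mod // -lL.
have n_gt0 : (0 < n)%N by lia.
have L0_mod4 : (L 0 %% 4 = 3)%N.
  by apply: Nat2Z.inj; rewrite L_mod4 // Zmod4_of_mod8 l0_mod8.
have Li_mod4 i : (0 < i < n)%N -> (L i %% 4 = 1)%N.
  move=> /andP[i_gt0 i_lt_n]; have := l_mod8 i (conj (ltP i_gt0) (ltP i_lt_n)).
  by move=> li8; apply: Nat2Z.inj; rewrite L_mod4 // Zmod4_of_mod8 li8.
exists n, L; split; last first.
  have l_ge0 i : (0 <= i < 0 + n)%N -> (0 <= l i)%Z.
    by move=> /andP[_ i_lt_n]; have := l_ge2 i i_lt_n; lia.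
  by rewrite /prod_first -(Zofnat_prod l_ge0) /index_iota subn0.
split => //; [lia | by case: n_even => k ->; rewrite multE oddM | ].
apply: legendre_table_symbol => //.
- by rewrite -!lL //; lia.
- by move=> j j_n; rewrite -!lL; [apply: leg0j | |]; lia.
- by move=> i j i_gt0 ij_n; rewrite -!lL; [apply: legij | |]; lia.
Qed.

Lemma deng_li_3mod4 (m : Z) : deng_li m -> (m mod 4 = 3)%Z /\ (0 < m)%Z.
Proof.
move=> /deng_li_primes_of [n [L [dlL ->]]].
have M3 := deng_li_prod_mod4 dlL; have := congr1 Z.of_nat M3.
by rewrite Zofnat_mod //; split => //; lia.
Qed.

(* With [a = 2 k + 1] and [b = 2 c], the norm equation reads [(k + 1) k = m c^2]. *)
Lemma deng_li_norm1_even (m a b : Z) : deng_li m -> (1 <= a)%Z -> (1 <= b)%Z ->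
  (a * a - m * (b * b) = 1)%Z -> Z.even b ->
  exists x y, [/\ (1 <= x)%Z, (1 <= y)%Z, (x * x - m * (y * y) = 1)%Z,
                 a = (x * x + m * (y * y))%Z & b = (2 * x * y)%Z].
Proof.
move=> dl a_ge1 b_ge1 norm b_even.
have [_ m_gt0] := deng_li_3mod4 dl; have [n [L [dlL Hm]]] := deng_li_primes_of dl.
have [c bc] := proj1 (Z.even_spec b) b_even.
have [k ak] : Z.Odd a.
  by case: (Z.Even_or_Odd a) => // [[a' aa']]; move: norm; rewrite aa' bc; lia.
have kc : (k * k + k = m * (c * c))%Z by move: norm; rewrite ak bc; lia.
have k_ge1 : (1 <= k)%Z by nia.
have AC : ((Z.to_nat k).+1 * Z.to_nat k = (\prod_(0 <= i < n) L i) * Z.to_nat c ^ 2)%N.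
  by apply: Nat2Z.inj; rewrite -mulnn !Nat2Z.inj_mul Nat2Z.inj_succ -Hm !Z2Nat.id; lia.
have [|x [y [Ex Ey Exy]]] := deng_li_consecutive dlL _ AC; first lia.
have {}Ex : (k + 1 = Z.of_nat x * Z.of_nat x)%Z.
  by have := congr1 Z.of_nat Ex; rewrite -mulnn Nat2Z.inj_succ Nat2Z.inj_mul Z2Nat.id; lia.
have {}Ey : (k = m * (Z.of_nat y * Z.of_nat y))%Z.
  by have := congr1 Z.of_nat Ey; rewrite -mulnn !Nat2Z.inj_mul -Hm Z2Nat.id; lia.
have {}Exy : (c = Z.of_nat x * Z.of_nat y)%Z.
  by have := congr1 Z.of_nat Exy; rewrite Nat2Z.inj_mul Z2Nat.id; lia.
exists (Z.of_nat x), (Z.of_nat y); split; [nia | nia | lia | lia | lia].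
Qed.

Theorem lemma5p3 (m a b : Z) :
  deng_li m ->
  fundamental_unit m (IZR a + IZR b * sqrt (IZR m))%R ->
  Z.odd b = true.
Proof.
move=> dl eps_fund; have [m_3mod4 m_gt0] := deng_li_3mod4 dl.
have [eps_unit [eps_gt1 _]] := eps_fund.
have norm := Zsqrt_unit_norm m m_3mod4 m_gt0 a b eps_unit.
have [a_ge1 b_ge1] := Zsqrt_unit_gt1_coords m m_gt0 a b norm eps_gt1.
case b_odd: (Z.odd b) => //.
have b_even : Z.even b by rewrite -Z.negb_odd b_odd.
have [x [y [x_ge1 y_ge1 xy_norm ea eb]]] := deng_li_norm1_even dl a_ge1 b_ge1 norm b_even.
by case: (fundamental_unit_not_sqr m m_gt0 a b x y eps_fund x_ge1 y_ge1 xy_norm ea eb).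
Qed.
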